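(* Let $A$ be a finite alphabet, $a\in A$, and let $M$ and $N$ be finite $\mathcal J$-trivial monoids with $|M|=m$ and $|N|=n$. Let $\rho$ be the number of elements in a longest strict $\leq_{\mathcal R}$-chain in $M$ and $\lambda$ the number of elements in a longest strict $\leq_{\mathcal L}$-chain in $N$. Let $\varphi:A^*\to M$ and $\psi:A^*\to N$ be homomorphisms, and let $\mu_a:A^*\to M\Diamond N$ be the associated homomorphism. Then for every $u\in A^*$ the set $(\mu_a(u))_{1,2}$ has at most $\rho+\lambda-1$ elements (and $\rho+\lambda-1\leq m+n-1$). In particular, $$|\mu_a(A^* )|\leq mn\left(\binom{mn}{0}+\binom{mn}{1}+\dots+\binom{mn}{\rho+\lambda-1}\right).$$
   Context: On a monoid $O$: $p\leq_{\mathcal R} q$ iff $p=qr$ for some $r\in O$; $p\leq_{\mathcal L} q$ iff $p=sq$ for some $s\in O$; $p\leq_{\mathcal J} q$ iff $p=sqr$ for some $r,s\in O$. $O$ is $\mathcal J$-trivial if $p\leq_{\mathcal J}q\leq_{\mathcal J}p$ implies $p=q$. For finite monoids $M,N$, the Schützenberger product $M\Diamond N$ is the set of $2\times2$ matrices $P$ with $P_{1,1}\in M$, $P_{2,2}\in N$, $P_{2,1}=\emptyset$, $P_{1,2}\subseteq M\times N$, with multiplication $(PQ)_{1,1}=P_{1,1}Q_{1,1}$, $(PQ)_{2,2}=P_{2,2}Q_{2,2}$, $(PQ)_{1,2}=\{(P_{1,1}x,y)\mid (x,y)\in Q_{1,2}\}\cup\{(z,tQ_{2,2})\mid (z,t)\in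 P_{1,2}\}$. Given $\varphi,\psi$ and $a\in A$, $\mu_a$ is defined by $(\mu_a(u))_{1,1}=\varphi(u)$, $(\mu_a(u))_{2,2}=\psi(u)$, $(\mu_a(u))_{1,2}=\{(\varphi(u'),\psi(u''))\mid u=u'au'',\ u',u''\in A^*\}$. *)

From mathcomp Require Import all_boot.
Set Implicit Arguments. Unset Strict Implicit. Unset Printing Implicit Defensive.

Definition is_monoid (M : finType) (mul : M -> M -> M) (one : M) : Prop :=
  [/\ associative mul, left_id one mul & right_id one mul].

Definition R_le (M : finType) (mul : M -> M -> M) (p q : M) : bool :=
  [exists r, p == mul q r].
Definition L_le (M : finType) (mul : M -> M -> M) (p q : M) : bool :=
  [exists s, p == mul s q].
Definition J_le (M : finType) (mul : M -> M -> M) (p q : M) : bool :=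
  [exists r, [exists s, p == mul (mul s q) r]].

Definition J_trivial (M : finType) (mul : M -> M -> M) : Prop :=
  forall p q : M, J_le mul p q -> J_le mul q p -> p = q.

Definition R_lt (M : finType) (mul : M -> M -> M) (p q : M) : bool :=
  R_le mul p q && ~~ R_le mul q p.
Definition L_lt (M : finType) (mul : M -> M -> M) (p q : M) : bool :=
  L_le mul p q && ~~ L_le mul q p.

Definition longest_chain_size (M : finType) (lt : rel M) (k : nat) : Prop :=
  (exists s : seq M, sorted lt s /\ size s = k) /\
  (forall s : seq M, sorted lt s -> size s <= k).

Definition word_hom (A M : finType) (mul : M -> M -> M) (one : M)
  (f : seq A -> M) : Prop :=
  f [::] = one /\ forall u v, f (u ++ v) = mul (f u) (f v).

(* Schützenberger product M <> N: matrices encoded as triples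
   (P11, P22, P12) with P12 a subset of M x N (P21 is empty). *)
Definition diamond (M N : finType) := (M * N * {set M * N})%type.

Definition diamond_mul (M N : finType) (mulM : M -> M -> M) (mulN : N -> N -> N)
  (P Q : diamond M N) : diamond M N :=
  (mulM P.1.1 Q.1.1, mulN P.1.2 Q.1.2,
   [set xy | [exists x : M * N, (x \in Q.2) && (xy == (mulM P.1.1 x.1, x.2))]]
   :|: [set xy | [exists z : M * N, (z \in P.2) && (xy == (z.1, mulN z.2 Q.1.2))]]).

(* (mu_a u)_{1,2} = {(phi u', psi u'') | u = u' a u''} ; the factorizations
   u = u' a u'' correspond to positions i with u_i = a, u' = take i u,
   u'' = drop i.+1 u. *)
Definition mu12 (A M N : finType) (phi : seq A -> M) (psi : seq A -> N)
  (a : A) (u : seq A) : {set M * N} :=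
  [set p | [exists i : 'I_(size u),
      (nth a u i == a) && (p == (phi (take i u), psi (drop i.+1 u)))]].

Definition mu (A M N : finType) (phi : seq A -> M) (psi : seq A -> N)
  (a : A) (u : seq A) : diamond M N :=
  (phi u, psi u, mu12 phi psi a u).

From mathcomp Require Import all_boot zify.

Set Implicit Arguments. Unset Strict Implicit. Unset Printing Implicit Defensive.

(* In a J-trivial monoid the R- and L-preorders are partial orders.  For
   factorizations u = u' a u'' at positions i <= j, phi of the longer prefix
   lies R-below phi of the shorter one, while psi of the longer suffix lies
   L-above psi of the shorter one; so (mu_a u)_{1,2} is a chain for the order
   (x, y) <= (x', y') iff x' <=R x and y <=L y'.  A chain in a product of two
   partial orders has at most |X| + |Y| - 1 elements, X and Y being its
   (totally ordered) projections, hence at most rho + lambda - 1 elements.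
   The last bound counts triples (phi u, psi u, small subset of M x N). *)

Section Chains.

Variables (T : finType) (le : rel T).
Hypothesis le_trans : transitive le.

Local Notation lt := (fun x y => le x y && ~~ le y x).

Lemma strict_part_trans : transitive lt.
Proof.
move=> y x z /andP[lxy nyx] /andP[lyz nzy]; rewrite (le_trans lxy lyz) /=.
by apply: contra nyx; apply: le_trans.
Qed.

Lemma longest_chain_le_card k : longest_chain_size lt k -> k <= #|T|.
Proof.
case=> [[s [lt_s <-]] _]; rewrite cardE; apply: uniq_leq_size.
  by apply: (sorted_uniq _ _ lt_s); [exact: strict_part_trans | move=> x; rewrite andbN].
by move=> x; rewrite mem_enum.
Qed.

Hypothesis le_anti : antisymmetric le.

Lemma sorted_strict_part s : uniq s -> sorted le s -> sorted lt s.
Proof.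
elim: s => // x [|y s] IH //= /andP[x_ys uniq_ys] /andP[lxy le_ys].
rewrite lxy /=; apply/andP; split; last exact: IH.
apply: contraL x_ys => lyx.
by rewrite (@le_anti x y) ?lxy ?mem_head.
Qed.

Lemma card_total_le_longest k (X : {set T}) :
  longest_chain_size lt k -> {in X &, total le} -> #|X| <= k.
Proof.
move=> [_ longest] le_tot.
have le_sort : sorted le (sort le (enum X)).
  by apply: (sort_sorted_in le_tot); apply/allP => x; rewrite mem_enum.
have uniq_sort : uniq (sort le (enum X)) by rewrite sort_uniq enum_uniq.
by have := longest _ (sorted_strict_part uniq_sort le_sort); rewrite size_sort -cardE.
Qed.

End Chains.

Section UpSets.

Variables (T : finType) (le : rel T).
Hypotheses (le_refl : reflexive le) (le_trans : transitive le)
  (le_anti : antisymmetric le).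

Lemma upset_subset (X : {set T}) x y :
  le y x -> [set z in X | le x z] \subset [set z in X | le y z].
Proof.
move=> lyx; apply/subsetP => z; rewrite !inE => /andP[-> lxz].
exact: le_trans lxz.
Qed.

Lemma card_upset_lt (X : {set T}) x y :
  y \in X -> le y x -> x != y ->
  #|[set z in X | le x z]| < #|[set z in X | le y z]|.
Proof.
move=> yX lyx nxy; apply: proper_card; rewrite properE upset_subset //=.
apply/subsetPn; exists y; first by rewrite inE yX le_refl.
by rewrite inE yX /=; apply: contra nxy => lxy; rewrite (@le_anti x y) ?lxy.
Qed.

End UpSets.

Section AntitoneChains.

Variables (M N : finType) (leM : rel M) (leN : rel N).
Hypotheses (leM_refl : reflexive leM) (leM_trans : transitive leM)
  (leM_anti : antisymmetric leM).
Hypotheses (leN_refl : reflexive leN) (leN_trans : transitive leN)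
  (leN_anti : antisymmetric leN).

Let geN_anti : antisymmetric (fun x y => leN y x).
Proof. by move=> x y; rewrite andbC; apply: leN_anti. Qed.

Variable S : {set M * N}.
Hypothesis S_chain : {in S &, total (fun p q => leM q.1 p.1 && leN p.2 q.2)}.

Let X := [set p.1 | p in S].
Let Y := [set p.2 | p in S].

(* Counting the elements of X above p.1 and of Y below p.2 strictly increases
   along the chain, and takes values in [2, #|X| + #|Y|]. *)
Let rank (p : M * N) :=
  #|[set x in X | leM p.1 x]| + #|[set y in Y | leN y p.2]|.

Let rank_lt p q :
  q \in S -> leM q.1 p.1 -> leN p.2 q.2 -> p != q -> rank p < rank q.
Proof.
move=> qS lq1p1 lp2q2 npq.
have q1X : q.1 \in X by apply/imsetP; exists q.
have q2Y : q.2 \in Y by apply/imsetP; exists q.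
have le1 := subset_leq_card (upset_subset leM_trans X lq1p1).
have le2 := subset_leq_card (upset_subset (rev_trans leN_trans) Y lp2q2).
case: (eqVneq p.1 q.1) => [e1 | ne1]; last first.
  have := card_upset_lt leM_refl leM_trans leM_anti q1X lq1p1 ne1.
  by rewrite /rank; lia.
have ne2 : p.2 != q.2.
  apply: contra npq => /eqP e2.
  by rewrite [p]surjective_pairing e1 e2 -surjective_pairing.
have := card_upset_lt (le := fun x y => leN y x) leN_refl (rev_trans leN_trans) geN_anti
  q2Y lp2q2 ne2.
by rewrite /rank; lia.
Qed.

Let rank_inj : {in S &, injective rank}.
Proof.
move=> p q pS qS rank_pq; apply/eqP; apply/negPn/negP => npq.
case/orP: (S_chain pS qS) => /andP[l1 l2].
  by have := rank_lt qS l1 l2 npq; rewrite rank_pq ltnn.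
by move: (rank_lt pS l1 l2); rewrite eq_sym rank_pq ltnn => /(_ npq).
Qed.

Let rank_bounds p : p \in S -> 2 <= rank p <= #|X| + #|Y|.
Proof.
move=> pS; have p1X : p.1 \in X by apply/imsetP; exists p.
have p2Y : p.2 \in Y by apply/imsetP; exists p.
have up_gt0 : 0 < #|[set x in X | leM p.1 x]|.
  by apply/card_gt0P; exists p.1; rewrite inE p1X leM_refl.
have down_gt0 : 0 < #|[set y in Y | leN y p.2]|.
  by apply/card_gt0P; exists p.2; rewrite inE p2Y leN_refl.
have up_le : #|[set x in X | leM p.1 x]| <= #|X|.
  by apply/subset_leq_card/subsetP => x; rewrite inE => /andP[].
have down_le : #|[set y in Y | leN y p.2]| <= #|Y|.
  by apply/subset_leq_card/subsetP => y; rewrite inE => /andP[].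
by rewrite /rank; apply/andP; split; lia.
Qed.

Let card_le_card_proj : #|S| <= #|X| + #|Y| - 1.
Proof.
rewrite cardE -(size_map rank) -[_ - 1](size_iota 2).
apply: uniq_leq_size.
  by rewrite (map_inj_in_uniq _) ?enum_uniq // => p q; rewrite !mem_enum; apply: rank_inj.
move=> n /mapP[p]; rewrite mem_enum => /rank_bounds /andP[lb ub] ->.
by rewrite mem_iota; apply/andP; split; lia.
Qed.

Lemma card_antitone_chain_le_longest kM kN :
  longest_chain_size (fun x y => leM x y && ~~ leM y x) kM ->
  longest_chain_size (fun x y => leN x y && ~~ leN y x) kN ->
  #|S| <= kM + kN - 1.
Proof.
move=> longestM longestN; apply: (leq_trans card_le_card_proj).
apply: leq_sub2r; apply: leq_add.
  apply: (card_total_le_longest leM_anti longestM).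
  move=> x y /imsetP[p pS ->] /imsetP[q qS ->].
  by case/orP: (S_chain pS qS) => /andP[l _]; rewrite l ?orbT.
apply: (card_total_le_longest leN_anti longestN).
move=> x y /imsetP[p pS ->] /imsetP[q qS ->].
by case/orP: (S_chain pS qS) => /andP[_ l]; rewrite l ?orbT.
Qed.

End AntitoneChains.

Section Green.

Variables (M : finType) (mul : M -> M -> M) (one : M).
Hypothesis monoidM : is_monoid mul one.

Lemma R_le_refl : reflexive (R_le mul).
Proof. by case: monoidM => _ _ mul1 x; apply/existsP; exists one; rewrite mul1. Qed.

Lemma L_le_refl : reflexive (L_le mul).
Proof. by case: monoidM => _ mul1 _ x; apply/existsP; exists one; rewrite mul1. Qed.

Lemma R_le_trans : transitive (R_le mul).
Proof.
case: monoidM => mulA _ _ y x z /existsP[r /eqP->] /existsP[r' /eqP->].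
by apply/existsP; exists (mul r' r); rewrite mulA.
Qed.

Lemma L_le_trans : transitive (L_le mul).
Proof.
case: monoidM => mulA _ _ y x z /existsP[s /eqP->] /existsP[s' /eqP->].
by apply/existsP; exists (mul s s'); rewrite mulA.
Qed.

Lemma J_le_of_R_le p q : R_le mul p q -> J_le mul p q.
Proof.
case: monoidM => _ mul1 _ /existsP[r pE].
by apply/existsP; exists r; apply/existsP; exists one; rewrite mul1.
Qed.

Lemma J_le_of_L_le p q : L_le mul p q -> J_le mul p q.
Proof.
case: monoidM => _ _ mul1 /existsP[s pE].
by apply/existsP; exists one; apply/existsP; exists s; rewrite mul1.
Qed.

Hypothesis Jtrivial : J_trivial mul.

Lemma R_le_anti : antisymmetric (R_le mul).
Proof. by move=> p q /andP[/J_le_of_R_le pq /J_le_of_R_le qp]; apply: Jtrivial. Qed.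

Lemma L_le_anti : antisymmetric (L_le mul).
Proof. by move=> p q /andP[/J_le_of_L_le pq /J_le_of_L_le qp]; apply: Jtrivial. Qed.

Section Words.

Variables (A : finType) (phi : seq A -> M).
Hypothesis phi_hom : word_hom mul one phi.

Lemma R_le_take (u : seq A) i j :
  i <= j -> R_le mul (phi (take j u)) (phi (take i u)).
Proof.
move=> le_ij; apply/existsP; exists (phi (drop i (take j u))).
by rewrite -phi_hom.2 -(take_takel u le_ij) cat_take_drop.
Qed.

Lemma L_le_drop (u : seq A) i j :
  i <= j -> L_le mul (phi (drop i u)) (phi (drop j u)).
Proof.
move=> le_ij; apply/existsP; exists (phi (take (j - i) (drop i u))).
by rewrite -phi_hom.2 -{2}(subnK le_ij) -drop_drop cat_take_drop.
Qed.

End Words.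

End Green.

Lemma mu12_antitone_chain (A M N : finType) (a : A)
  (mulM : M -> M -> M) (oneM : M) (mulN : N -> N -> N) (oneN : N)
  (phi : seq A -> M) (psi : seq A -> N)
  (phi_hom : word_hom mulM oneM phi) (psi_hom : word_hom mulN oneN psi)
  (u : seq A) :
  {in mu12 phi psi a u &, total (fun p q => R_le mulM q.1 p.1 && L_le mulN p.2 q.2)}.
Proof.
move=> p q; rewrite !inE.
move=> /existsP[i /andP[_ /eqP->]] /existsP[j /andP[_ /eqP->]] /=.
have [le_ij | /ltnW le_ji] := leqP i j; apply/orP; [left | right].
  by rewrite (R_le_take phi_hom _ le_ij) (L_le_drop psi_hom _ (le_ij : i.+1 <= j.+1)).
by rewrite (R_le_take phi_hom _ le_ji) (L_le_drop psi_hom _ (le_ji : j.+1 <= i.+1)).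
Qed.

Lemma card_sets_card_le (T : finType) k :
  #|[set B : {set T} | #|B| <= k]| = \sum_(i < k.+1) 'C(#|T|, i).
Proof.
elim: k => [|k IHk].
  by rewrite big_ord1 -card_draws; apply: eq_card => B; rewrite !inE leqn0.
rewrite big_ord_recr /= -IHk -card_draws.
rewrite -(cardsID [set B : {set T} | #|B| <= k] [set B : {set T} | #|B| <= k.+1]).
by congr (_ + _); apply: eq_card => B; rewrite !inE; case: (ltngtP #|B| k.+1); lia.
Qed.

Theorem proposition6
  (A M N : finType) (a : A)
  (mulM : M -> M -> M) (oneM : M) (mulN : N -> N -> N) (oneN : N)
  (HM : is_monoid mulM oneM) (HN : is_monoid mulN oneN)
  (JM : J_trivial mulM) (JN : J_trivial mulN)
  (rho lambda : nat)
  (Hrho : longest_chain_size (R_lt mulM) rho)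
  (Hlambda : longest_chain_size (L_lt mulN) lambda)
  (phi : seq A -> M) (psi : seq A -> N)
  (Hphi : word_hom mulM oneM phi) (Hpsi : word_hom mulN oneN psi) :
  (forall u : seq A, #|mu12 phi psi a u| <= rho + lambda - 1) /\
  rho + lambda - 1 <= #|M| + #|N| - 1 /\
  (forall S : {set diamond M N},
     (forall x, x \in S -> exists u : seq A, mu phi psi a u = x) ->
     #|S| <= #|M| * #|N| * \sum_(i < (rho + lambda - 1).+1) 'C(#|M| * #|N|, i)).
Proof.
have card_mu12 u : #|mu12 phi psi a u| <= rho + lambda - 1.
  exact: (card_antitone_chain_le_longest (R_le_refl HM) (R_le_trans HM) (R_le_anti HM JM)
            (L_le_refl HN) (L_le_trans HN) (L_le_anti HN JN)
            (mu12_antitone_chain Hphi Hpsi (u := u)) Hrho Hlambda).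
split; first exact: card_mu12.
split.
  by rewrite leq_sub2r // leq_add // (longest_chain_le_card (R_le_trans HM) Hrho,
    longest_chain_le_card (L_le_trans HN) Hlambda).
move=> S S_image.
have S_sub : S \subset setX [set: M * N] [set B : {set M * N} | #|B| <= rho + lambda - 1].
  by apply/subsetP => _ /S_image[u <-]; rewrite in_setX in_setT inE card_mu12.
apply: (leq_trans (subset_leq_card S_sub)).
by rewrite cardsX cardsT card_sets_card_le card_prod.
Qed.
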